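(* Assume the inverse Jacobian $J=\frac{d\mathbb P}{d(\mathbb P\circ T)}$ has a version which is continuous on $\Omega_S$. Let $\omega\in\Omega_{\mathbb P}$ be a periodic point with minimal period $r\ge1$. Then $\lim_{n\to\infty}\beta_{\omega,n}$ exists and equals $\prod_{j=0}^{r-1}J(T^j\omega)$ (with $J$ the continuous version).
   Context: Let $\mathcal A$ be a finite or countable set with $|\mathcal A|>1$, $\Omega=\mathcal A^{\mathbb N}$ with the product of discrete topologies, $\mathcal F$ the σ-algebra generated by coordinate projections, $T$ the left shift, and $\mathbb P$ a $T$-invariant ψ-mixing probability measure (there is $\psi_m\to0$ with $|\mathbb P(E\cap T^{-(n+m)}F)-\mathbb P(E)\mathbb P(F)|\le\psi_m\mathbb P(E)\mathbb P(F)$ for all $m,n$, $E\in\mathcal F_{\{0,\dots,n-1\}}$, $F\in\mathcal F$). Let $S=(S_{a,b})_{a,b\in\mathcal A}$ be a $0$–$1$ matrix with no zero rows or columns, $\Omega_S=\{\omega:S_{\omega_j,\omega_{j+1}}=1\ \forall j\ge0\}$ with the subspace topology, $\mathcal F_S=\{E\in\mathcal F:E\subset\Omega_S\}$; assume $\mathbb P(\Omega_S)=1$ and $T:\Omega_S\to\Omega_S$ is topologically mixing. For $E\in\mathcal F_S$ define $\mathbb P\circ T(E)=\sum_{a\in\mathcal A}\mathbb P(T(E\cap[a]))$; this is a σ-finite measure on $(\Omega_S,\mathcal F_S)$ with $\mathbb P\ll\mathbb P\circ T$, and the inverse Jacobian is $J=\frac{d\mathbb P}{d(\mathbb P\circ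 T)}$. Cylinders $[a_0,\dots,a_{n-1}]=\{\omega:\omega_j=a_j,0\le j<n\}$, $A_n^\omega=[\omega_0,\dots,\omega_{n-1}]$, $\Omega_{\mathbb P}=\{\omega:\mathbb P(A_n^\omega)>0\ \forall n\}$; $\omega$ periodic with minimal period $r$ means $r=\min\{j\ge1:T^j\omega=\omega\}<\infty$; $\beta_{\omega,n}=\mathbb P(A^\omega_{n+r}\mid A^\omega_n)$. *)

From mathcomp Require Import all_boot all_order all_algebra.
From mathcomp Require Import all_classical all_reals all_analysis.
Import Order.TTheory GRing.Theory Num.Theory.
Import numFieldNormedType.Exports.

Set Implicit Arguments.
Unset Strict Implicit.
Unset Printing Implicit Defensive.

Local Open Scope classical_set_scope.
Local Open Scope ring_scope.

Section Defs.
Variable A : pointedType.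

(* generators of the product sigma-algebra: coordinate cylinders {x | x i = a} *)
Definition coord_gen : set (set (nat -> A)) :=
  [set E | exists (i : nat) (a : A), E = [set x | x i = a]].

Definition Omega : measurableType (coord_gen.-sigma)%mdisp :=
  g_sigma_algebraType coord_gen.

Definition sshift (x : Omega) : Omega := fun n => x n.+1.

Definition cyl (x : Omega) (n : nat) : set Omega :=
  [set y | forall i, (i < n)%N -> y i = x i].

(* E belongs to F_{0,...,n-1}: E is determined by the first n coordinates *)
Definition depends_on_first (n : nat) (E : set Omega) : Prop :=
  forall x y : Omega, (forall i, (i < n)%N -> x i = y i) -> E x -> E y.

Definition Omega_S (S : A -> A -> bool) : set Omega :=
  [set x | forall j, S (x j) (x j.+1)].

(* U is open in Omega_S (subspace topology of the product of discrete
   topologies, whose basis is the cylinders) *)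
Definition open_in_S (S : A -> A -> bool) (U : set Omega) : Prop :=
  U `<=` Omega_S S /\
  forall x, U x -> exists n, cyl x n `&` Omega_S S `<=` U.

Definition top_mixing_S (S : A -> A -> bool) : Prop :=
  forall U V : set Omega, open_in_S S U -> open_in_S S V ->
    U !=set0 -> V !=set0 ->
    exists N : nat, forall n, (N <= n)%N ->
      ((iter n sshift) @^-1` U) `&` V !=set0.

Definition continuous_on_S {R : realType} (S : A -> A -> bool) (f : Omega -> R)
  : Prop :=
  forall x, Omega_S S x -> forall e : R, 0 < e ->
    exists n, forall y, Omega_S S y -> cyl x n y -> `|f y - f x| < e.

Context {R : realType}.

Definition shift_invariant (P : probability Omega R) : Prop :=
  forall E : set Omega, measurable E -> P (sshift @^-1` E) = P E.

Definition psi_mixing (P : probability Omega R) : Prop :=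
  exists psi : nat -> R, psi @ \oo --> (0 : R) /\
    forall (m n : nat) (E F : set Omega),
      measurable E -> depends_on_first n E -> measurable F ->
      (`| P (E `&` (iter (n + m) sshift) @^-1` F) - P E * P F |
         <= (psi m)%:E * P E * P F)%E.

(* mu coincides with P o T on F_S:
   (P o T)(E) = sum_a P(T(E cap [a])) *)
Definition is_PoT (P : probability Omega R) (S : A -> A -> bool)
  (mu : {measure set Omega -> \bar R}) : Prop :=
  forall E : set Omega, measurable E -> E `<=` Omega_S S ->
    mu E = \esum_(a in [set: A]) P (sshift @` (E `&` [set x | x 0%N = a])).

Definition is_inv_jacobian (P : probability Omega R) (S : A -> A -> bool)
  (mu : {measure set Omega -> \bar R}) (J : Omega -> R) : Prop :=
  measurable_fun (Omega_S S) J /\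
  (forall x, Omega_S S x -> 0 <= J x) /\
  forall E : set Omega, measurable E -> E `<=` Omega_S S ->
    P E = (\int[mu]_(x in E) (J x)%:E)%E.

Definition Omega_P (P : probability Omega R) : set Omega :=
  [set x | forall n, (0 < P (cyl x n))%E].

Definition cond_prob (P : probability Omega R) (B C : set Omega) : R :=
  fine (P (B `&` C)) / fine (P C).

Definition beta (P : probability Omega R) (w : Omega) (r n : nat) : R :=
  cond_prob P (cyl w (n + r)) (cyl w n).

End Defs.

Definition min_period (A : pointedType) (w : Omega A) (r : nat) : Prop :=
  (0 < r)%N /\ iter r (@sshift A) w = w /\
  forall j, (0 < j)%N -> (j < r)%N -> iter j (@sshift A) w <> w.

From mathcomp Require Import all_boot all_order all_algebra.
From mathcomp Require Import all_classical all_reals all_analysis.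
Import Order.TTheory GRing.Theory Num.Theory.
Import numFieldNormedType.Exports.

(* The inverse Jacobian J is a density of P with respect to P o T, and P o T
   gives the cylinder [x_0 ... x_n] (inside Omega_S) the mass P([x_1 ... x_n]).
   Hence P(A_{n+1}^x) / P(A_n^{Tx}) is an average of J over A_{n+1}^x, which
   tends to J x by continuity of J.  As T^r w = w and A_{n+r}^w is contained in
   A_n^w, beta_{w,n} = P(A_{n+r}^w) / P(A_n^{T^r w}) telescopes into the product
   over j < r of P(A_{m+1}^{T^j w}) / P(A_m^{T^{j+1} w}), whose factors tend to
   J (T^j w). *)

Set Implicit Arguments.
Unset Strict Implicit.
Unset Printing Implicit Defensive.
Local Open Scope classical_set_scope.
Local Open Scope ring_scope.

Section Shift.
Variable A : pointedType.
Implicit Types (x y : Omega A) (S : A -> A -> bool).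

Lemma measurable_coord i a : measurable [set x : Omega A | x i = a].
Proof. by apply: sub_sigma_algebra; exists i, a. Qed.

Lemma cylE x n : cyl x n = \bigcap_(i in `I_n) [set y : Omega A | y i = x i].
Proof. by apply/seteqP; split=> y hy i /hy. Qed.

Lemma measurable_cyl x n : measurable (cyl x n).
Proof.
by rewrite cylE; apply: fin_bigcap_measurable => [|i _]; [exact: finite_II|exact: measurable_coord].
Qed.

Lemma cyl_le x m n : (m <= n)%N -> cyl x n `<=` cyl x m.
Proof. by move=> lemn y hy i ltim; apply: hy; exact: leq_trans lemn. Qed.

Lemma measurable_sshift : measurable_fun setT (@sshift A).
Proof.
apply: (@measurability _ _ (Omega A) (Omega A) setT _ (@coord_gen A) erefl).
move=> _ [_ [i [a ->]] <-].
rewrite setTI (_ : _ @^-1` _ = [set x : Omega A | x i.+1 = a]) //.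
exact: measurable_coord.
Qed.

Lemma measurable_iter_sshift k : measurable_fun setT (iter k (@sshift A)).
Proof.
elim: k => [|k IH]; first exact: measurable_id.
exact: measurableT_comp measurable_sshift IH.
Qed.

Lemma measurable_Omega_S S : countable [set: A] -> measurable (Omega_S S).
Proof.
move=> Acount.
have -> : Omega_S S = \bigcap_j \bigcup_(a : A) \bigcup_(b : A)
    ([set x : Omega A | x j = a] `&` [set x | x j.+1 = b] `&` [set _ | S a b]).
  apply/seteqP; split=> x /= hx j.
    by move=> _; exists (x j) => //; exists (x j.+1) => //; split=> //; exact: hx.
  by have [a _ [b _ [[-> ->]]]] := hx j I.
apply: bigcapT_measurable => j.
apply: countable_bigcupT_measurable => // a; apply: countable_bigcupT_measurable => // b.
apply: measurableI; first by apply: measurableI; exact: measurable_coord.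
case: (S a b).
  by rewrite (_ : [set _ | _] = setT) //; apply/seteqP.
by rewrite (_ : [set _ | _] = set0) //; apply/seteqP; split.
Qed.

Lemma iter_sshiftE k x i : iter k (@sshift A) x i = x (k + i)%N.
Proof. by elim: k i => // k IH i; rewrite iterS /sshift IH addnS. Qed.

Lemma Omega_S_iter S k x : Omega_S S x -> Omega_S S (iter k (@sshift A) x).
Proof. by move=> hx j; rewrite !iter_sshiftE addnS; exact: hx. Qed.

Lemma cyl_sub_preimage_iter k x n :
  cyl x (k + n) `<=` iter k (@sshift A) @^-1` cyl (iter k (@sshift A) x) n.
Proof. by move=> y hy i hi /=; rewrite !iter_sshiftE; apply: hy; rewrite ltn_add2l. Qed.

Lemma image_sshift_cyl S x n : Omega_S S x -> (0 < n)%N ->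
  @sshift A @` (cyl x n.+1 `&` Omega_S S) = cyl (sshift x) n `&` Omega_S S.
Proof.
move=> hx n_gt0; apply/seteqP; split=> [_ [y [hy hyS] <-]|y [hy hyS]].
  by split=> [i hi|j]; [exact: hy|exact: hyS].
exists (fun i => if i is j.+1 then y j else x 0%N); last exact: funext.
split=> [[|i] //= hi|[|j] //=]; first exact: hy.
by rewrite (hy 0%N n_gt0); exact: hx.
Qed.

End Shift.

Section Probability.
Variables (A : pointedType) (R : realType) (P : probability (Omega A) R).

Lemma shift_invariant_iter : shift_invariant P ->
  forall k E, measurable E -> P (iter k (@sshift A) @^-1` E) = P E.
Proof.
move=> Pinv k; elim: k => // k IH E mE.
rewrite (_ : _ @^-1` E = iter k (@sshift A) @^-1` (@sshift A @^-1` E)); last first.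
  by apply/seteqP; split=> x; rewrite /= -iterS iterSr.
rewrite IH ?Pinv //.
by rewrite -[X in measurable X]setTI; exact: measurable_sshift.
Qed.

Lemma probability_setI_full B C :
  measurable B -> measurable C -> P C = 1%E -> P (B `&` C) = P B.
Proof.
move=> mB mC PC1.
have PBC0 : P (B `\` C) = 0%E.
  apply/eqP; rewrite eq_le measure_ge0 andbT.
  have <- : P (~` C) = 0%E by rewrite probability_setC // PC1 subee.
  by apply: le_measure; rewrite ?inE; [exact: measurableD|exact: measurableC|move=> x []].
rewrite -[in RHS](setUIDK B C) measureU.
- by rewrite -[LHS]adde0; congr (_ + _)%E; exact/esym.
- exact: measurableI.
- exact: measurableD.
- by apply/seteqP; split=> // x [[_ ?] [_ []]].
Qed.

Lemma Omega_P_iter w k : shift_invariant P -> Omega_P P w ->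
  Omega_P P (iter k (@sshift A) w).
Proof.
move=> Pinv hw n; apply: lt_le_trans (hw (k + n)%N) _.
rewrite -(shift_invariant_iter Pinv k (measurable_cyl (iter k _ w) n)).
apply: le_measure; rewrite ?inE; [exact: measurable_cyl| |exact: cyl_sub_preimage_iter].
by rewrite -[X in measurable X]setTI; apply: measurable_iter_sshift => //; exact: measurable_cyl.
Qed.

Lemma Omega_P_sub_Omega_S S : countable [set: A] -> P (Omega_S S) = 1%E ->
  Omega_P P `<=` Omega_S S.
Proof.
move=> Acount PS1 w hw j; apply/negPn/negP => notS.
have := hw j.+2.
rewrite -(probability_setI_full (measurable_cyl _ _) (measurable_Omega_S S Acount) PS1).
suff -> : cyl w j.+2 `&` Omega_S S = set0 by rewrite measure0 ltxx.
apply/seteqP; split=> // y [hy hyS]; move/negP: notS; apply.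
by rewrite -(hy j) // -(hy j.+1).
Qed.

Lemma probability_cylE x n : P (cyl x n) = (fine (P (cyl x n)))%:E.
Proof. by rewrite fineK // fin_num_measure //; exact: measurable_cyl. Qed.

Lemma fine_cyl_gt0 x n : Omega_P P x -> 0 < fine (P (cyl x n)).
Proof. by move=> hx; rewrite -lte_fin -probability_cylE. Qed.

Lemma betaE w r n : beta P w r n = fine (P (cyl w (n + r))) / fine (P (cyl w n)).
Proof. by rewrite /beta /cond_prob setIidl //; apply: cyl_le; exact: leq_addr. Qed.

End Probability.

Lemma ge0_integral_bounds d (T : measurableType d) (R : realType)
    (mu : {measure set T -> \bar R}) (D : set T) (f : T -> R) (c e : R) :
  measurable D -> measurable_fun D f -> 0 <= c ->
  (forall y, D y -> c <= f y <= e) ->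
  (c%:E * mu D <= \int[mu]_(y in D) (f y)%:E <= e%:E * mu D)%E.
Proof.
move=> mD mf c_ge0 hf; have mEf := (measurable_realfun.measurable_EFinP _ _).2 mf.
have f_ge0 y : D y -> (0 <= (f y)%:E)%E.
  by move=> /hf /andP[cf _]; rewrite lee_fin (le_trans c_ge0).
rewrite -!integral_cst //; apply/andP; split; apply: ge0_le_integral => //.
  by move=> y /hf /andP[cf _]; rewrite lee_fin.
by move=> y /hf /andP[_ fe]; rewrite lee_fin.
Qed.

Section InverseJacobian.
Variables (A : pointedType) (R : realType) (P : probability (Omega A) R).
Variables (S : A -> A -> bool) (mu : {measure set Omega A -> \bar R}) (J : Omega A -> R).
Hypotheses (Acount : countable [set: A]) (PS1 : P (Omega_S S) = 1%E).
Hypotheses (hmu : is_PoT P S mu) (hJ : is_inv_jacobian P S mu J).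

Let measurable_cyl_S x n : measurable (cyl x n `&` Omega_S S).
Proof. exact: measurableI (measurable_cyl _ _) (measurable_Omega_S S Acount). Qed.

Lemma PoT_cyl x n : Omega_S S x -> (0 < n)%N ->
  mu (cyl x n.+1 `&` Omega_S S) = P (cyl (sshift x) n).
Proof.
move=> hx n_gt0; rewrite hmu; [|exact: measurable_cyl_S|exact: subIsetr].
have image_slice a : P (@sshift A @` (cyl x n.+1 `&` Omega_S S `&` [set y | y 0%N = a])) =
    if a \in [set x 0%N] then P (cyl (sshift x) n) else 0%E.
  case: ifPn => [/set_mem /= ->|/negP xa].
    rewrite setIidl; last by move=> y [hy _]; exact: hy.
    rewrite image_sshift_cyl // probability_setI_full //; first exact: measurable_cyl.
    exact: measurable_Omega_S.
  rewrite (_ : _ `&` _ = set0) ?image_set0 ?measure0 //.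
  by apply/seteqP; split=> // y [[hy _] ya]; apply: xa; rewrite -ya inE hy.
by rewrite (eq_esum (fun a _ => image_slice a)) -esum_mkcond esum_set1.
Qed.

Lemma inv_jacobian_cyl x n :
  P (cyl x n) = (\int[mu]_(y in cyl x n `&` Omega_S S) (J y)%:E)%E.
Proof.
rewrite -(probability_setI_full (measurable_cyl x n) (measurable_Omega_S S Acount) PS1).
by apply: hJ.2.2; [exact: measurable_cyl_S|exact: subIsetr].
Qed.

Lemma cyl_ratio_cvg x : continuous_on_S S J -> Omega_S S x -> Omega_P P (sshift x) ->
  (fun n => fine (P (cyl x n.+1)) / fine (P (cyl (sshift x) n))) @ \oo --> J x.
Proof.
move=> Jc hx hTx; apply/cvgrPdist_le => e e_gt0.
have [N hN] := Jc x hx e e_gt0.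
exists (maxn N 1) => // n /=; rewrite geq_max => /andP[leNn n_gt0].
have J_near y : (cyl x n.+1 `&` Omega_S S) y -> Num.max (J x - e) 0 <= J y <= J x + e.
  move=> [hy hyS]; have := hN y hyS (cyl_le (leqW leNn) hy).
  by rewrite ltr_distl ge_max hJ.2.1 // andbT => /andP[/ltW -> /ltW ->].
have mJ : measurable_fun (cyl x n.+1 `&` Omega_S S) J.
  exact: measurable_funS (measurable_Omega_S S Acount) (@subIsetr _ _ _) hJ.1.
(* Truncating the lower bound at 0 keeps both comparisons among nonnegative integrands. *)
have max_ge0 : 0 <= Num.max (J x - e) 0 by rewrite le_max lexx orbT.
have := ge0_integral_bounds mu (measurable_cyl_S x n.+1) mJ max_ge0 J_near.
rewrite -inv_jacobian_cyl PoT_cyl // [P (cyl x _)]probability_cylE.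
rewrite [P (cyl (sshift x) _)]probability_cylE -!EFinM !lee_fin.
have q_gt0 := fine_cyl_gt0 n hTx.
move=> /andP[lo up]; rewrite /= ler_distl; apply/andP; split.
  by rewrite lerBlDr ler_pdivrMr.
rewrite -lerBlDr ler_pdivlMr // (le_trans _ lo) //.
by rewrite ler_wpM2r ?(ltW q_gt0) // le_max lexx.
Qed.

End InverseJacobian.

Lemma ratio_telescope_cvg (R : realFieldType) (p : nat -> nat -> R) (L : nat -> R) r :
  (forall k n, p k n != 0) ->
  (forall k, (fun n => p k n.+1 / p k.+1 n) @ \oo --> L k) ->
  (fun n => p 0%N (n + r)%N / p r n) @ \oo --> \prod_(k < r) L k.
Proof.
move=> p_neq0 pL; elim: r => [|r IH].
  rewrite big_ord0; under eq_fun do rewrite addn0 divff //.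
  exact: cvg_cst.
have -> : (fun n => p 0%N (n + r.+1)%N / p r.+1 n) =
    (fun n => p 0%N (n.+1 + r)%N / p r n.+1) \* (fun n => p r n.+1 / p r.+1 n).
  by apply/funext => n /=; rewrite addSnnS mulrA divfK.
rewrite big_ord_recr /=; apply: cvgM => //.
by rewrite (cvg_shiftS (fun n => p 0%N (n + r)%N / p r n)).
Qed.

Theorem theorem3 (R : realType) (A : pointedType)
  (hAcount : countable [set: A])
  (hA2 : exists a b : A, a <> b)
  (P : probability (Omega A) R)
  (hinv : shift_invariant P)
  (hpsi : psi_mixing P)
  (S : A -> A -> bool)
  (hrows : forall a, exists b, S a b)
  (hcols : forall b, exists a, S a b)
  (hPS : P (Omega_S S) = 1%E)
  (hmix : top_mixing_S S)
  (mu : {measure set (Omega A) -> \bar R})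
  (hmu : is_PoT P S mu)
  (J : Omega A -> R)
  (hJ : is_inv_jacobian P S mu J)
  (hJc : continuous_on_S S J)
  (w : Omega A) (hw : Omega_P P w)
  (r : nat) (hr : min_period w r) :
  beta P w r n @[n --> \oo] --> \prod_(j < r) J (iter j (@sshift A) w).
Proof.
have wS := Omega_P_sub_Omega_S hAcount hPS hw.
have [_ [wr _]] := hr.
pose p k n := fine (P (cyl (iter k (@sshift A) w) n)).
have -> : beta P w r = fun n => p 0%N (n + r)%N / p r n.
  by apply/funext => n; rewrite betaE /p wr.
apply: (ratio_telescope_cvg (L := fun k => J (iter k (@sshift A) w))) => [k n|k].
  by rewrite gt_eqF // fine_cyl_gt0 //; exact: Omega_P_iter.
apply: (cyl_ratio_cvg hAcount hPS hmu hJ hJc); first exact: Omega_S_iter.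
exact: (Omega_P_iter k.+1).
Qed.
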